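(* Let $m,n$ be positive integers. Then $$\mathcal{N}_{\frac{n}{m}}(q)=q^d\,\mathcal{D}_{\frac{m}{n}}(q^{-1}),\qquad \mathcal{D}_{\frac{n}{m}}(q)=q^d\,\mathcal{N}_{\frac{m}{n}}(q^{-1}),$$ where $d=\max\big(\deg\mathcal{N}_{\frac{m}{n}},\deg\mathcal{D}_{\frac{m}{n}}\big)$.
   Context: The $q$-deformed rationals: $x\mapsto[x]_q$ is the unique map from $\mathbb{Q}\cup\{\infty\}$ to $\mathbb{Q}(q)\cup\{\infty\}$ (rational functions in the variable $q$) satisfying $[0]_q=0$, $[x+1]_q=q[x]_q+1$ and $[-1/x]_q=-1/(q[x]_q)$ for all $x$. For a positive rational $x$, $\mathcal{N}_x(q)$ and $\mathcal{D}_x(q)$ denote the numerator and denominator of $[x]_q$: the polynomials in $\mathbb{Z}[q]$ with no common divisor in $\mathbb{Z}[q]$ other than $\pm1$ and with positive leading coefficients such that $[x]_q=\mathcal{N}_x(q)/\mathcal{D}_x(q)$. It is known that $[\frac{n}{m}]_q=1/[\frac{m}{n}]_{q^{-1}}$. *)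

From HB Require Import structures.
From mathcomp Require Import all_boot all_order all_algebra fraction.
Set Implicit Arguments. Unset Strict Implicit. Unset Printing Implicit Defensive.
Import Order.TTheory GRing.Theory Num.Theory.
Local Open Scope ring_scope.

(* Q(q): the field of rational functions, realized as the fraction field of Z[q]. *)
Definition Qq : Type := {fraction {poly int}}.

Definition qvar : Qq := tofrac ('X : {poly int}).

Definition pfrac (p : {poly int}) : Qq := tofrac p.

Definition eval_qinv (p : {poly int}) : Qq :=
  (map_poly (fun c : int => tofrac (c%:P : {poly int})) p).[qvar^-1].

(* Q ∪ {∞} is [option rat] and Q(q) ∪ {∞} is [option Qq], with None = ∞. *)

Definition shiftQ (x : option rat) : option rat :=
  match x with Some r => Some (r + 1) | None => None end.
Definition invQ (x : option rat) : option rat :=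
  match x with
  | Some r => if r == 0 then None else Some (- r^-1)
  | None => Some 0
  end.
Definition shiftQq (y : option Qq) : option Qq :=
  match y with Some a => Some (qvar * a + 1) | None => None end.
Definition invQq (y : option Qq) : option Qq :=
  match y with
  | Some a => if a == 0 then None else Some (- (qvar * a)^-1)
  | None => Some 0
  end.

(* f is the q-deformation map x |-> [x]_q : the (unique) map satisfying
   [0]_q = 0, [x+1]_q = q[x]_q + 1, [-1/x]_q = -1/(q[x]_q). *)
Definition is_qdeformation (f : option rat -> option Qq) : Prop :=
  [/\ f (Some 0) = Some 0,
      forall x, f (shiftQ x) = shiftQq (f x)
    & forall x, f (invQ x) = invQq (f x)].

(* divisibility in Z[q] (genuine, not up to scalars) *)
Definition pdvd (a b : {poly int}) : Prop := exists c : {poly int}, b = c * a.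

Definition is_num_den (v : option Qq) (N D : {poly int}) : Prop :=
  [/\ v = Some (pfrac N / pfrac D),
      forall p : {poly int}, pdvd p N -> pdvd p D -> p = 1 \/ p = -1,
      0 < lead_coef N
    & 0 < lead_coef D].

Definition pdeg (p : {poly int}) : nat := (size p).-1.

(** The map [x |-> [x]_q] satisfies [[1/x]_q = 1/[x]_{q^{-1}}] at the level
    of representatives: along the Euclidean algorithm from [1] to [n/m], every
    value [[x]_q] is a quotient [N/D] of nonzero polynomials with nonnegative
    coefficients such that [[1/x]_q = D(q^{-1})/N(q^{-1})].  Writing
    [d = max(deg N_{m/n}, deg D_{m/n})], the reversals [q^d D_{m/n}(q^{-1})]
    and [q^d N_{m/n}(q^{-1})] are coprime polynomials whose quotient is
    [[n/m]_q], so they agree with [N_{n/m}] and [D_{n/m}] up to a common sign.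
    The sign is [+] because a reduced pair equivalent to one with nonnegative
    coefficients has no positive real root, so its members are positive at
    [q = 1] as soon as their leading coefficients are. *)

Set Warnings "-notation-overridden -ambiguous-paths -notation-incompatible-prefix".
From HB Require Import structures.
From mathcomp Require Import all_boot all_order all_algebra fraction.
From mathcomp Require Import polyrcf realalg ring zify.
Import Order.TTheory GRing.Theory Num.Theory.
Local Open Scope ring_scope.

Implicit Types (p c M N D : {poly int}) (k d : nat).

(** * Reversal of integer polynomials *)

Definition revp k p : {poly int} := \poly_(i < k.+1) p`_(k - i).

Lemma coef_revp k p i : (revp k p)`_i = if (i <= k)%N then p`_(k - i) else 0.
Proof. by rewrite coef_poly ltnS. Qed.

Lemma size_revp k p : (size (revp k p) <= k.+1)%N.
Proof. exact: size_poly. Qed.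

Lemma revpK {k p} : (size p <= k.+1)%N -> revp k (revp k p) = p.
Proof.
move=> sp; apply/polyP=> i; rewrite !coef_revp.
case: leqP => ik; first by rewrite leq_subr subKn.
by apply/esym/nth_default; apply: leq_trans sp ik.
Qed.

Lemma revp0 k : revp k 0 = 0.
Proof. by apply/polyP=> i; rewrite coef_revp !coef0 if_same. Qed.

Lemma revp_eq0 {k p} : (size p <= k.+1)%N -> (revp k p == 0) = (p == 0).
Proof.
move=> sp; apply/eqP/eqP=> [|->]; last exact: revp0.
by move=> p0; rewrite -(revpK sp) p0 revp0.
Qed.

Lemma horner1_revp {k p} : (size p <= k.+1)%N -> (revp k p).[1] = p.[1].
Proof.
move=> sp; rewrite (horner_coef_wide _ (size_revp k p)) (horner_coef_wide _ sp).
rewrite (reindex_inj rev_ord_inj) /=; apply: eq_bigr => i _.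
by rewrite !expr1n !mulr1 coef_revp subSS leq_subr subKn // -ltnS.
Qed.

(** * Substituting [q] and [q^-1] *)

Lemma qvar_neq0 : qvar != 0.
Proof. by rewrite /qvar tofrac_eq0 polyX_eq0. Qed.

Lemma pfrac_eq0 p : (pfrac p == 0) = (p == 0).
Proof. exact: tofrac_eq0. Qed.

Lemma pfracM p r : pfrac (p * r) = pfrac p * pfrac r.
Proof. exact: rmorphM. Qed.

Lemma pfracD p r : pfrac (p + r) = pfrac p + pfrac r.
Proof. exact: rmorphD. Qed.

Lemma pfracX : pfrac 'X = qvar.
Proof. by []. Qed.

Lemma pfrac_inj : injective pfrac.
Proof. by move=> p r /eqP; rewrite /pfrac tofrac_eq => /eqP. Qed.

Lemma eq_pfrac_div N1 D1 N2 D2 : D1 != 0 -> D2 != 0 ->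
  (pfrac N1 / pfrac D1 == pfrac N2 / pfrac D2) = (N1 * D2 == N2 * D1).
Proof.
by move=> D10 D20; rewrite eqr_div ?pfrac_eq0 // -!pfracM (inj_eq pfrac_inj).
Qed.

Lemma pfracE {k p} : (size p <= k)%N ->
  pfrac p = \sum_(i < k) pfrac (p`_i)%:P * qvar ^+ i.
Proof.
move=> sp; have Ep : \poly_(i < k) p`_i = p.
  apply/polyP=> i; rewrite coef_poly; case: ltnP => // ki.
  by apply/esym/nth_default; apply: leq_trans sp ki.
rewrite -{1}Ep poly_def /pfrac rmorph_sum; apply: eq_bigr => i _.
by rewrite -mul_polyC rmorphM rmorphXn.
Qed.

Lemma qinv_comm : commr_rmorph (@tofrac _ \o @polyC int) qvar^-1.
Proof. by move=> x; apply: mulrC. Qed.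

Lemma eval_qinvE : eval_qinv =1 horner_morph qinv_comm.
Proof. by []. Qed.

Lemma eval_qinvD p r : eval_qinv (p + r) = eval_qinv p + eval_qinv r.
Proof. by rewrite !eval_qinvE rmorphD. Qed.

Lemma eval_qinvM p r : eval_qinv (p * r) = eval_qinv p * eval_qinv r.
Proof. by rewrite !eval_qinvE rmorphM. Qed.

Lemma eval_qinvX : eval_qinv 'X = qvar^-1.
Proof. by rewrite eval_qinvE horner_morphX. Qed.

Lemma eval_qinv_sum {k p} : (size p <= k)%N ->
  eval_qinv p = \sum_(i < k) pfrac (p`_i)%:P * qvar^-1 ^+ i.
Proof.
move=> sp; rewrite /eval_qinv (@horner_coef_wide _ k).
  by apply: eq_bigr => i _; rewrite coef_map_id0 // rmorph0.
by apply: leq_trans sp; apply: size_poly.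
Qed.

Lemma pfrac_revp {k p} : (size p <= k.+1)%N ->
  pfrac (revp k p) = qvar ^+ k * eval_qinv p.
Proof.
move=> sp; rewrite (pfracE (size_revp k p)) (eval_qinv_sum sp) mulr_sumr.
rewrite (reindex_inj rev_ord_inj) /=; apply: eq_bigr => i _.
have ik : (i <= k)%N by rewrite -ltnS.
rewrite coef_revp subSS leq_subr subKn // mulrCA; congr (_ * _).
by rewrite -[in qvar ^+ k](subnK ik) exprD exprVn mulfK // expf_neq0 ?qvar_neq0.
Qed.

Lemma eval_qinv_eq0 p : (eval_qinv p == 0) = (p == 0).
Proof.
have sp : (size p <= (size p).-1.+1)%N by rewrite leqSpred.
rewrite -[RHS](revp_eq0 sp) -[RHS]pfrac_eq0 (pfrac_revp sp) mulf_eq0.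
by rewrite expf_eq0 (negbTE qvar_neq0) andbF.
Qed.

Lemma eval_qinv_revp {k p} : (size p <= k.+1)%N ->
  eval_qinv (revp k p) = pfrac p / qvar ^+ k.
Proof.
move=> sp; rewrite -[in pfrac p](revpK sp) pfrac_revp ?size_revp //.
by rewrite [qvar ^+ k * _]mulrC mulfK // expf_neq0 ?qvar_neq0.
Qed.

Lemma eval_qinv_div {N1 D1 N2 D2} : N1 != 0 -> N2 != 0 ->
  N1 * D2 = N2 * D1 -> eval_qinv D1 / eval_qinv N1 = eval_qinv D2 / eval_qinv N2.
Proof.
move=> N10 N20 E; apply/eqP; rewrite eqr_div ?eval_qinv_eq0 //.
by rewrite -!eval_qinvM mulrC -E mulrC.
Qed.

Lemma revpM k c p : (size (c * p)%R <= k.+1)%N -> c != 0 -> p != 0 ->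
  revp k (c * p) = revp (k - (size p).-1) c * revp (size p).-1 p.
Proof.
move=> scp c0 p0; move: scp; rewrite size_mul // => scp.
have sc0 : (0 < size c)%N by rewrite size_poly_gt0.
have sp0 : (0 < size p)%N by rewrite size_poly_gt0.
have [sc pk] : (size c <= (k - (size p).-1).+1)%N /\ ((size p).-1 <= k)%N.
  by move: scp sc0 sp0; rewrite -!subn1; move: (size c) (size p) => a b; lia.
apply: pfrac_inj; rewrite pfracM !pfrac_revp ?size_mul ?leqSpred //.
by rewrite eval_qinvM mulrACA -exprD subnK.
Qed.

(** * Reduced pairs *)

Lemma lead_coef_gt0_neq0 {p} : 0 < lead_coef p -> p != 0.
Proof. by rewrite -lead_coef_eq0 => /gt_eqF->. Qed.

Definition reduced N D := forall p, pdvd p N -> pdvd p D -> p = 1 \/ p = -1.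

Lemma reduced_sym {N D} : reduced N D -> reduced D N.
Proof. by move=> h p pN pD; apply: h. Qed.

Lemma reduced_coprimep {N D} : reduced N D -> coprimep N D.
Proof.
move=> hr; rewrite coprimep_def.
have [r1 e1] := dvdpP_int (dvdp_gcdl N D).
have [r2 e2] := dvdpP_int (dvdp_gcdr N D).
have := hr (zprimitive (gcdp N D)) (ex_intro _ r1 (etrans e1 (mulrC _ _)))
  (ex_intro _ r2 (etrans e2 (mulrC _ _))).
by rewrite -size_zprimitive => -[->|->]; rewrite ?size_polyN size_poly1.
Qed.

Lemma reduced_coprimez {N D} :
  reduced N D -> coprimez (zcontents N) (zcontents D).
Proof.
move=> hr; set g := gcdz (zcontents N) (zcontents D).
have dvd_g M : (g %| zcontents M)%Z -> pdvd g%:P M.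
  move=> gM; exists ((zcontents M %/ g)%Z *: zprimitive M).
  by rewrite mulrC mul_polyC scalerA mulrC divzK // -zpolyEprim.
have [/(congr1 (fun p => p`_0))|] := hr _ (dvd_g N (dvdz_gcdl _ _))
                                        (dvd_g D (dvdz_gcdr _ _)).
  by rewrite coefC coef1 /= /coprimez -/g => ->.
by rewrite -polyCN => /polyC_inj; rewrite /g /gcdz.
Qed.

Lemma reduced_eqp {N1 D1 N2 D2} : reduced N1 D1 -> reduced N2 D2 ->
  N1 * D2 = N2 * D1 -> N1 %= N2.
Proof.
move=> /reduced_coprimep c1 /reduced_coprimep c2 E; rewrite /eqp.
by rewrite -(Gauss_dvdpl _ c1) -E dvdp_mulIl -(Gauss_dvdpl _ c2) E dvdp_mulIl.
Qed.

Lemma eqp_zprimitive {p r} : p %= r -> zprimitive p = zprimitive r.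
Proof.
have [->|r0 pr] := eqVneq r 0; first by rewrite eqp0 => /eqP->.
have p0 : p != 0.
  by apply: contra_neq r0 => p0; move: pr; rewrite p0 eqp_sym eqp0 => /eqP.
have := congr1 zprimitive (eqp_eq pr).
by rewrite !zprimitiveZ ?lead_coef_eq0.
Qed.

Lemma zcontents_gt0 {p} : 0 < lead_coef p -> 0 < zcontents p.
Proof. by move=> lp; rewrite -sgz_gt0 sgz_contents sgz_gt0. Qed.

Lemma coprimez_cross_eq {a b c e : int} : coprimez a b -> coprimez c e ->
  a * e = c * b -> a != 0 -> (c = a /\ e = b) \/ (c = - a /\ e = - b).
Proof.
move=> cab cce E a0.
have ac : (a %| c)%Z by rewrite -(Gauss_dvdzl _ cab) -E dvdz_mulr.
have ca : (c %| a)%Z by rewrite -(Gauss_dvdzl _ cce) E dvdz_mulr.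
have : `|c| == `|a| by rewrite -!abszE; apply/eqP; congr Posz; apply/eqP;
  rewrite eqn_dvd -!dvdzE ca ac.
rewrite eqr_norm2 => /orP[]/eqP ec; [left | right]; split=> //;
  apply: (mulfI a0); rewrite E ec; ring.
Qed.

Lemma reduced_unique {N1 D1 N2 D2} : reduced N1 D1 -> reduced N2 D2 ->
  0 < lead_coef N1 -> 0 < lead_coef D1 -> N2 != 0 -> D2 != 0 ->
  N1 * D2 = N2 * D1 -> (N2 = N1 /\ D2 = D1) \/ (N2 = - N1 /\ D2 = - D1).
Proof.
move=> r1 r2 lN1 lD1 N20 D20 E.
have E' : D1 * N2 = D2 * N1 by rewrite mulrC -E mulrC.
have pN := eqp_zprimitive (reduced_eqp r1 r2 E).
have pD := eqp_zprimitive (reduced_eqp (reduced_sym r1) (reduced_sym r2) E').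
have PQ0 : zprimitive N1 * zprimitive D1 != 0.
  by rewrite mulf_neq0 // zprimitive_eq0 -lead_coef_eq0 gt_eqF.
have Ec : zcontents N1 * zcontents D2 = zcontents N2 * zcontents D1.
  move: E; rewrite {1}[N1]zpolyEprim {1}[D2]zpolyEprim {1}[N2]zpolyEprim.
  rewrite {1}[D1]zpolyEprim -pN -pD -!scalerAl -!scalerAr !scalerA => /eqP.
  rewrite -subr_eq0 -scalerBl scale_poly_eq0 (negbTE PQ0) orbF subr_eq0.
  by move=> /eqP.
have [[c2 e2]|[c2 e2]] := coprimez_cross_eq (reduced_coprimez r1)
  (reduced_coprimez r2) Ec (lt0r_neq0 (zcontents_gt0 lN1)); [left | right].
  by rewrite [N2]zpolyEprim [D2]zpolyEprim c2 e2 -pN -pD -!zpolyEprim.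
by rewrite [N2]zpolyEprim [D2]zpolyEprim c2 e2 -pN -pD !scaleNr -!zpolyEprim.
Qed.

Lemma reduced_revp {d N D} : (size N <= d.+1)%N -> (size D <= d.+1)%N ->
  (N`_d != 0) || (D`_d != 0) -> reduced N D -> reduced (revp d N) (revp d D).
Proof.
move=> sN sD hd hr p [c1 e1] [c2 e2].
have top0 M c : revp d M = c * p -> p`_0 = 0 -> M`_d = 0.
  move=> /(congr1 (fun r : {poly int} => r`_0)).
  by rewrite coef_revp leq0n subn0 coef0M => -> ->; rewrite mulr0.
have p00 : p`_0 != 0.
  apply: contraTneq hd => p00.
  by rewrite (top0 _ _ e1 p00) (top0 _ _ e2 p00) eqxx.
have p0 : p != 0 by apply: contraNneq p00 => ->; rewrite coef0.
set e := (size p).-1.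
have dvd_revp M c : (size M <= d.+1)%N -> revp d M = c * p -> pdvd (revp e p) M.
  move=> sM eM; have [c0|c0] := eqVneq c 0.
    by exists 0; rewrite mul0r -(revpK sM) eM c0 mul0r revp0.
  exists (revp (d - e) c); rewrite -(revpK sM) eM revpM // -eM; exact: size_revp.
have ep := hr _ (dvd_revp N c1 sN e1) (dvd_revp D c2 sD e2).
(* [revp e p = ±1] means [p = ±q^e], and [p`_0 != 0] forces [e = 0]. *)
have pE : p = revp e (revp e p) by rewrite revpK // leqSpred.
have [e0|e_gt0] := posnP e.
  have -> : p = ((revp e p)`_0)%:P.
    by apply/polyP=> i; rewrite {1}pE e0 !coef_revp coefC leqn0; case: eqP.
  by case: ep => ->; [left; rewrite coef1 | right; rewrite coefN coef1 polyCN].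
move: p00; rewrite pE coef_revp subn0.
by case: ep => ->; rewrite ?coefN coef1 gtn_eqF ?oppr0 ?eqxx.
Qed.

(** * Positivity at [q = 1] *)

Definition nneg_poly {R : numDomainType} (p : {poly R}) := forall i, 0 <= p`_i.

Lemma horner_nneg_gt0 (R : realDomainType) (p : {poly R}) x :
  nneg_poly p -> p != 0 -> 0 < x -> 0 < p.[x].
Proof.
move=> np p0 x0.
have lt_top : ((size p).-1 < size p)%N by rewrite prednK ?size_poly_gt0.
rewrite horner_coef (bigD1 (Ordinal lt_top)) //=.
apply: ltr_wpDr.
  by apply: sumr_ge0 => i _; rewrite mulr_ge0 ?np ?exprn_ge0 ?ltW.
by rewrite mulr_gt0 ?exprn_gt0 // lt_def np andbT -/(lead_coef p) lead_coef_eq0.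
Qed.

Section RealDomain.

Variable R : realDomainType.
Local Notation toR := (map_poly (intr : int -> R)).

Lemma nneg_poly_map p : nneg_poly p -> nneg_poly (toR p).
Proof. by move=> np i; rewrite coef_map ler0z. Qed.

(** A positive root of [P] would be a root of [Q], as [N'] is positive there;
    a Bezout identity excludes common roots. *)
Lemma reduced_horner_neq0 P Q N' D' x : reduced P Q -> nneg_poly N' -> N' != 0 ->
  P * D' = N' * Q -> 0 < x -> (toR P).[x] != 0.
Proof.
move=> hr nN N0 E x0; have [[u v] /= uv] := Bezoutp P Q.
have /size_poly1P[c c0 hc] : size (u * P + v * Q) == 1%N.
  by rewrite (eqp_size uv) -coprimep_def reduced_coprimep.
have N'x : 0 < (toR N').[x].
  apply: horner_nneg_gt0 => //; first exact: nneg_poly_map.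
  rewrite -size_poly_eq0 size_map_inj_poly ?mulr0z ?size_poly_eq0 //.
  exact: intr_inj.
apply/eqP => Px.
have Qx : (toR Q).[x] = 0.
  have /eqP := congr1 (fun r => (toR r).[x]) E.
  by rewrite /= !rmorphM !hornerM Px mul0r eq_sym mulf_eq0 gt_eqF //= => /eqP.
have /eqP := congr1 (fun r => (toR r).[x]) hc.
rewrite /= rmorphD !rmorphM hornerD !hornerM Px Qx !mulr0 addr0 map_polyC hornerC.
by rewrite eq_sym intr_eq0 (negbTE c0).
Qed.

End RealDomain.

Lemma reduced_horner1_gt0 {P Q N' D'} : reduced P Q -> 0 < lead_coef P ->
  nneg_poly N' -> N' != 0 -> P * D' = N' * Q -> 0 < P.[1].
Proof.
move=> hr lP nN N0 E; pose toR := map_poly (intr : int -> realalg).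
have noroot : {in `[(1 : realalg), +oo[, forall y, ~~ root (toR P) y}.
  move=> y; rewrite in_itv /= andbT => y1.
  exact: reduced_horner_neq0 hr nN N0 E (lt_le_trans ltr01 y1).
have := sgp_pinftyP noroot; move=> /(_ 1); rewrite in_itv /= lexx => /(_ isT).
rewrite /sgp_pinfty lead_coef_map_inj ?mulr0z //; last exact: intr_inj.
rewrite -[in (toR P).[1]](rmorph1 (intr : int -> realalg)) horner_map /=.
rewrite [Num.sg (lead_coef P)%:~R]gtr0_sg ?ltr0z // => sgP1.
by rewrite -(ltr0z realalg) -sgr_gt0 sgP1 ltr01.
Qed.

(** * Representatives along the Euclidean algorithm *)

Lemma shift_div {F : fieldType} {q a b : F} : b != 0 ->
  q * (a / b) + 1 = (q * a + b) / b.
Proof. by move=> b0; field. Qed.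

Lemma shift_div_neq0 {F : fieldType} {q a b : F} : b != 0 -> q != 0 ->
  q^-1 * b + a != 0 -> q * (a / b) + 1 != 0.
Proof.
move=> b0 q0 ba0.
have -> : q * (a / b) + 1 = q * (q^-1 * b + a) / b by field; rewrite b0 q0.
by rewrite mulf_neq0 ?invr_eq0 ?mulf_neq0.
Qed.

Lemma shift_inv_shift_div {F : fieldType} {q a b : F} : b != 0 -> q != 0 ->
  q^-1 * b + a != 0 -> q * - (q * (q * (a / b) + 1))^-1 + 1 = a / (q^-1 * b + a).
Proof.
move=> b0 q0 ba0; have qba0 : b + a * q != 0.
  have -> : b + a * q = q * (q^-1 * b + a) by field; rewrite q0.
  by rewrite mulf_neq0.
by field; rewrite q0 qba0 b0.
Qed.

Lemma shift_inv_shift_inv {F : fieldType} {y : F} : y != 0 -> y + 1 != 0 ->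
  y^-1 + 1 != 0 -> - (y^-1 + 1)^-1 + 1 = (y + 1)^-1.
Proof. by move=> y0 y10 yV10; field; rewrite y0 y10. Qed.

Definition qreciprocal_rep (f : option rat -> option Qq) (x : rat) :=
  exists N D, [/\ N != 0, D != 0, nneg_poly N, nneg_poly D &
    f (Some x) = Some (pfrac N / pfrac D) /\
    f (Some x^-1) = Some (eval_qinv D / eval_qinv N)].

Section QDeformation.

Context {f : option rat -> option Qq} (hf : is_qdeformation f).

Lemma qreciprocal_rep1 : qreciprocal_rep f 1.
Proof.
case: hf => f0 fS _; have f1 : f (Some 1) = Some 1.
  by have := fS (Some 0); rewrite /= add0r f0 /= mulr0 add0r.
have n1 : nneg_poly (1 : {poly int}) by move=> i; rewrite coef1 ler0n.
exists 1, 1; rewrite invr1 f1 /pfrac eval_qinvE !rmorph1 divr1.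
by rewrite mulr1 oner_neq0.
Qed.

Lemma qreciprocal_repS {x} :
  0 < x -> qreciprocal_rep f x -> qreciprocal_rep f (x + 1).
Proof.
case: hf => _ fS fV x0 [N [D [N0 D0 nN nD [fx fVx]]]].
have nXND : nneg_poly ('X * N + D).
  by move=> i; rewrite coefD coefXM; case: eqP => _; rewrite addr_ge0.
have XND0 : 'X * N + D != 0.
  apply/eqP => /(congr1 (horner^~ 1)) /eqP.
  rewrite hornerD hornerM hornerX mul1r horner0.
  by rewrite gt_eqF // addr_gt0 // horner_nneg_gt0.
have q0 := qvar_neq0; have Nq0 : eval_qinv N != 0 by rewrite eval_qinv_eq0.
have XNDq0 : qvar^-1 * eval_qinv N + eval_qinv D != 0.
  by rewrite -eval_qinvX -eval_qinvM -eval_qinvD eval_qinv_eq0.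
have xV10 : x^-1 + 1 != 0 by rewrite gt_eqF // addr_gt0 ?invr_gt0.
have x10 : x + 1 != 0 by rewrite gt_eqF // addr_gt0.
exists ('X * N + D), D; split=> //; split.
  have -> : Some (x + 1) = shiftQ (Some x) by [].
  rewrite fS fx /shiftQq; congr Some.
  by rewrite pfracD pfracM pfracX shift_div ?pfrac_eq0.
have -> : Some (x + 1)^-1 = shiftQ (invQ (shiftQ (Some x^-1))).
  by rewrite /shiftQ /invQ (negbTE xV10) shift_inv_shift_inv // gt_eqF.
rewrite fS fV fS fVx /shiftQq /invQq (negbTE (shift_div_neq0 Nq0 q0 XNDq0)).
rewrite eval_qinvD eval_qinvM eval_qinvX; congr Some.
exact: shift_inv_shift_div Nq0 q0 XNDq0.
Qed.

Lemma qreciprocal_repV {x} : qreciprocal_rep f x -> qreciprocal_rep f x^-1.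
Proof.
move=> [N [D [N0 D0 nN nD [fx fVx]]]]; set k := maxn (size N) (size D).
have sN : (size N <= k.+1)%N by rewrite ltnW // ltnS leq_maxl.
have sD : (size D <= k.+1)%N by rewrite ltnW // ltnS leq_maxr.
have nneg_revp p : nneg_poly p -> nneg_poly (revp k p).
  by move=> np i; rewrite coef_revp; case: ifP.
have qk : qvar ^+ k != 0 by rewrite expf_neq0 ?qvar_neq0.
exists (revp k D), (revp k N); rewrite invrK !revp_eq0 //.
split=> //; try exact: nneg_revp; split.
  by rewrite fVx !pfrac_revp // -mulf_div divff ?mul1r.
rewrite fx !eval_qinv_revp // invf_div mulf_div [_ * pfrac D]mulrC -mulf_div.
by rewrite divff ?mulr1.
Qed.

Lemma qreciprocal_rep_frac {n m} : (0 < n)%N -> (0 < m)%N ->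
  qreciprocal_rep f (n%:Q / m%:Q).
Proof.
have frac_gt0 (i j : nat) : (0 < i)%N -> (0 < j)%N -> 0 < i%:Q / j%:Q.
  by move=> i0 j0; rewrite divr_gt0 // ltr0z ltz_nat.
have subn_gt0_ltn (i j : nat) : (i < j)%N -> (0 < j - i)%N by rewrite subn_gt0.
have frac_addn1 (i j : nat) : (0 < j)%N -> i%:Q / j%:Q + 1 = (j + i)%N%:Q / j%:Q.
  move=> j0; have j0' : j%:Q != 0 by rewrite intr_eq0 eqz_nat -lt0n.
  by rewrite PoszD intrD; field.
have [s] := ubnP (n + m); elim: s n m => // s IH n m nms n0 m0.
case: (ltngtP n m) => [nm|mn|<-].
- have Ij : qreciprocal_rep f ((m - n)%N%:Q / n%:Q) by apply: IH; lia.
  have := qreciprocal_repS (frac_gt0 _ _ (subn_gt0_ltn _ _ nm) n0) Ij.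
  rewrite (frac_addn1 _ _ n0) (subnKC (ltnW nm)) => /qreciprocal_repV.
  by rewrite invf_div.
- have Ij : qreciprocal_rep f ((n - m)%N%:Q / m%:Q) by apply: IH; lia.
  have := qreciprocal_repS (frac_gt0 _ _ (subn_gt0_ltn _ _ mn) m0) Ij.
  by rewrite (frac_addn1 _ _ m0) (subnKC (ltnW mn)).
- by rewrite divff; [exact: qreciprocal_rep1 | rewrite intr_eq0 eqz_nat -lt0n].
Qed.

Lemma num_den_horner1_gt0 {n m N D} : (0 < n)%N -> (0 < m)%N ->
  is_num_den (f (Some (n%:Q / m%:Q))) N D -> 0 < N.[1] /\ 0 < D.[1].
Proof.
move=> n0 m0 [eND rND lN lD].
have [N' [D' [N'0 D'0 nN' nD' [fND _]]]] := qreciprocal_rep_frac n0 m0.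
have E : N * D' = N' * D.
  apply/eqP; rewrite -eq_pfrac_div ?(lead_coef_gt0_neq0 lD) //.
  by move: eND; rewrite fND => -[->].
have E' : D * N' = D' * N by rewrite mulrC -E mulrC.
split; first exact: reduced_horner1_gt0 rND lN nN' N'0 E.
exact: reduced_horner1_gt0 (reduced_sym rND) lD nD' D'0 E'.
Qed.

Lemma num_den_inv_revp {n m d N D} : (0 < n)%N -> (0 < m)%N ->
  is_num_den (f (Some (m%:Q / n%:Q))) N D ->
  (size N <= d.+1)%N -> (size D <= d.+1)%N ->
  f (Some (n%:Q / m%:Q)) = Some (pfrac (revp d D) / pfrac (revp d N)).
Proof.
move=> n0 m0 [eND _ lN lD] sN sD.
have [N' [D' [N'0 D'0 _ _ [fND fVND]]]] := qreciprocal_rep_frac m0 n0.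
have E : N' * D = N * D'.
  apply/eqP; rewrite -eq_pfrac_div ?(lead_coef_gt0_neq0 lD) //.
  by move: fND; rewrite eND => -[->].
rewrite -invf_div fVND (eval_qinv_div N'0 (lead_coef_gt0_neq0 lN) E).
by rewrite !pfrac_revp // -mulf_div divff ?mul1r ?expf_neq0 ?qvar_neq0.
Qed.

End QDeformation.

Lemma size_le_pdeg p d : (pdeg p <= d)%N -> (size p <= d.+1)%N.
Proof. by move=> pd; rewrite (leq_trans (leqSpred _)) // ltnS. Qed.

Lemma coef_maxn_pdeg_neq0 N D : N != 0 -> D != 0 ->
  let d := maxn (pdeg N) (pdeg D) in (N`_d != 0) || (D`_d != 0).
Proof.
rewrite /pdeg => N0 D0; case: leqP => _.
  by rewrite -/(lead_coef D) lead_coef_eq0 D0 orbT.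
by rewrite -/(lead_coef N) lead_coef_eq0 N0.
Qed.

Theorem corollary1 (f : option rat -> option Qq) (hf : is_qdeformation f)
  (m n : nat) (hm : (0 < m)%N) (hn : (0 < n)%N)
  (Nnm Dnm Nmn Dmn : {poly int})
  (hnm : is_num_den (f (Some (n%:Q / m%:Q))) Nnm Dnm)
  (hmn : is_num_den (f (Some (m%:Q / n%:Q))) Nmn Dmn) :
  let d := maxn (pdeg Nmn) (pdeg Dmn) in
  pfrac Nnm = qvar ^+ d * eval_qinv Dmn /\
  pfrac Dnm = qvar ^+ d * eval_qinv Nmn.
Proof.
move=> d; have [enm rnm lNnm lDnm] := hnm; have [_ rmn lNmn lDmn] := hmn.
have [Nmn0 Dmn0] := (lead_coef_gt0_neq0 lNmn, lead_coef_gt0_neq0 lDmn).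
have sN : (size Nmn <= d.+1)%N by rewrite size_le_pdeg ?leq_maxl.
have sD : (size Dmn <= d.+1)%N by rewrite size_le_pdeg ?leq_maxr.
have [A0 B0] : revp d Dmn != 0 /\ revp d Nmn != 0 by rewrite !revp_eq0.
have Erev : Nnm * revp d Nmn = revp d Dmn * Dnm.
  apply/eqP; rewrite -eq_pfrac_div ?(lead_coef_gt0_neq0 lDnm) //.
  by move: enm; rewrite (num_den_inv_revp hf hn hm hmn sN sD) => -[->].
have top : (Dmn`_d != 0) || (Nmn`_d != 0).
  by rewrite orbC; apply: coef_maxn_pdeg_neq0.
have rrev := reduced_revp sD sN top (reduced_sym rmn).
have [pNnm _] := num_den_horner1_gt0 hf hn hm hnm.
have [_ pDmn] := num_den_horner1_gt0 hf hm hn hmn.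
have [[<- <-]|[eA _]] := reduced_unique rnm rrev lNnm lDnm A0 B0 Erev.
  by rewrite !pfrac_revp.
by move: pDmn; rewrite -(horner1_revp sD) eA hornerN oppr_gt0 ltNge ltW.
Qed.
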